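(* Let $\lambda>0$, let $K$ be a $\lambda$-concave body in $\mathbb{R}^{n+1}$, and let $P$ be a $(k+1)$-dimensional linear subspace of $\mathbb{R}^{n+1}$ (with $0<k\leq n$). Then the orthogonal projection $K|P$ is a $\lambda$-concave body in $P$. Moreover, if $K$ is a $\lambda$-sausage body, then so is $K|P$.
   Context: A convex body is a compact convex set with non-empty interior; balls are closed. For $\lambda>0$, a convex body $K$ in a Euclidean space $E$ is $\lambda$-concave if for every $p\in\partial K$ there is a ball $B_{1/\lambda,p}\subset E$ of radius $1/\lambda$ whose boundary passes through $p$ such that $B_{1/\lambda,p}\cap U(p)\subseteq K\cap U(p)$ for some open neighborhood $U(p)$ of $p$ in $E$. A $\lambda$-sausage body is the convex hull of two (possibly coinciding) balls of radius $1/\lambda$. *)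

From HB Require Import structures.
From mathcomp Require Import all_boot all_order all_algebra.
From mathcomp Require Import all_classical all_reals topology normedtype.
Set Implicit Arguments. Unset Strict Implicit. Unset Printing Implicit Defensive.
Import Order.TTheory GRing.Theory Num.Theory numFieldNormedType.Exports.
Local Open Scope ring_scope.
Local Open Scope classical_set_scope.

(* Euclidean space R^m is modelled as row vectors 'rV[R]_m, with the
   standard Euclidean inner product and norm (defined explicitly, since the
   library norm on matrices is the sup norm). *)
Section Euclid.
Variables (R : realType) (m : nat).
Implicit Types (x y c z : 'rV[R]_m) (A S U : set 'rV[R]_m).

Definition edot x y : R := (x *m y^T) 0 0.
Definition enorm x : R := Num.sqrt (edot x x).

Definition eball c (r : R) : set 'rV[R]_m := [set x | enorm (x - c) <= r].

(* Topological notions relative to an ambient flat S (a linear subspace,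
   or the whole space setT), with the Euclidean metric. *)
Definition rel_open S U :=
  U `<=` S /\ forall y, U y -> exists2 e : R, 0 < e &
    forall z, S z -> enorm (z - y) < e -> U z.
Definition rel_int S A y :=
  S y /\ exists2 e : R, 0 < e & forall z, S z -> enorm (z - y) < e -> A z.
Definition rel_cl S A y :=
  S y /\ forall e : R, 0 < e -> exists z, A z /\ enorm (z - y) < e.
Definition rel_bd S A y := rel_cl S A y /\ ~ rel_int S A y.

Definition convex_set A :=
  forall x y (t : R), A x -> A y -> 0 <= t <= 1 -> A (t *: x + (1 - t) *: y).

Definition conv_hull A : set 'rV[R]_m :=
  [set x | forall C, convex_set C -> A `<=` C -> C x].

Definition convex_body_in S A :=
  A `<=` S /\ compact A /\ convex_set A /\ exists y, rel_int S A y.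

(* lambda-concave body in the flat S; balls in S are Euclidean balls
   centred in S intersected with S *)
Definition lconcave_in (lam : R) S A :=
  convex_body_in S A /\
  forall p, rel_bd S A p ->
    exists c, S c /\ enorm (p - c) = lam^-1 /\
      exists U, rel_open S U /\ U p /\
        (forall x, S x -> eball c lam^-1 x -> U x -> A x).

Definition lsausage_in (lam : R) S A :=
  exists c1 c2, S c1 /\ S c2 /\
    A = conv_hull ((eball c1 lam^-1 `&` S) `|` (eball c2 lam^-1 `&` S)).

End Euclid.

Definition subsp (R : realType) (m : nat) (P : 'M[R]_m) : set 'rV[R]_m :=
  [set x | (x <= P)%MS].

Definition oproj (R : realType) (m : nat) (P : 'M[R]_m) (K : set 'rV[R]_m)
  : set 'rV[R]_m :=
  [set y | subsp P y /\ exists x, K x /\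
     forall z, subsp P z -> edot (x - y) z = 0].

(* The orthogonal projection onto [P] is linear and 1-Lipschitz, so it
   preserves compactness, convexity and interior points, maps convex hulls to
   convex hulls and balls onto balls of the same radius in [P]; this handles
   convex bodies and sausage bodies.  For concavity, lift a boundary point [p]
   of [K|P] to a point [x] of [K] with [x - p] orthogonal to [P]; [x] is a
   boundary point of [K], so it has a supporting ball [B(c, 1/lam)].  If [c - x]
   had a nonzero component [w] orthogonal to [P], then for small [t > 0] the
   point [x + t w] would be interior to [B(c, 1/lam)], hence to [K], while still
   projecting to [p]; so [c - x] lies in [P], and the ball translated by
   [p - x], centred at the projection of [c], supports [K|P] at [p]. *)

From HB Require Import structures.
From mathcomp Require Import all_boot all_order all_algebra.
From mathcomp Require Import all_classical all_reals topology normedtype.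
From mathcomp Require Import ring lra.
Set Implicit Arguments. Unset Strict Implicit. Unset Printing Implicit Defensive.
Import Order.TTheory GRing.Theory Num.Theory numFieldNormedType.Exports.
Local Open Scope ring_scope.
Local Open Scope classical_set_scope.

Section EuclideanSpace.
Variables (R : realType) (m : nat).
Implicit Types (a r : R) (x y z c v : 'rV[R]_m) (K U : set 'rV[R]_m).

Lemma edotE x y : edot x y = \sum_j x 0 j * y 0 j.
Proof. by rewrite /edot mxE; apply: eq_bigr => j _; rewrite mxE. Qed.

Lemma edotC x y : edot x y = edot y x.
Proof. by rewrite !edotE; apply: eq_bigr => j _; rewrite mulrC. Qed.

Lemma edotDl x y z : edot (x + y) z = edot x z + edot y z.
Proof. by rewrite /edot mulmxDl mxE. Qed.

Lemma edotZl a x z : edot (a *: x) z = a * edot x z.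
Proof. by rewrite /edot -scalemxAl mxE. Qed.

Lemma edotNl x z : edot (- x) z = - edot x z.
Proof. by rewrite /edot mulNmx mxE. Qed.

Lemma edotBl x y z : edot (x - y) z = edot x z - edot y z.
Proof. by rewrite edotDl edotNl. Qed.

Lemma edotDr x y z : edot z (x + y) = edot z x + edot z y.
Proof. by rewrite edotC edotDl !(edotC z). Qed.

Lemma edotZr a x z : edot z (a *: x) = a * edot z x.
Proof. by rewrite edotC edotZl edotC. Qed.

Lemma edotNr x z : edot z (- x) = - edot z x.
Proof. by rewrite edotC edotNl edotC. Qed.

Lemma edotBr x y z : edot z (x - y) = edot z x - edot z y.
Proof. by rewrite edotDr edotNr. Qed.

Lemma edot0r z : edot z 0 = 0.
Proof. by rewrite /edot trmx0 mulmx0 mxE. Qed.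

Lemma edot_sqrD x y : edot (x + y) (x + y) = edot x x + 2 * edot x y + edot y y.
Proof. by rewrite edotDl !edotDr (edotC y x); ring. Qed.

Lemma edot_ge0 x : 0 <= edot x x.
Proof. by rewrite edotE sumr_ge0 // => j _; rewrite -expr2 sqr_ge0. Qed.

Lemma edot_eq0 x : edot x x = 0 -> x = 0.
Proof.
rewrite edotE => /psumr_eq0P sq0; apply/matrixP => i j; rewrite (ord1 i) mxE.
have /eqP := sq0 (fun k _ => sqr_ge0 (x 0 k)) j isT.
by rewrite -expr2 sqrf_eq0 => /eqP.
Qed.

Lemma enorm_ge0 x : 0 <= enorm x.
Proof. exact: sqrtr_ge0. Qed.

Lemma enorm_sqr x : enorm x ^+ 2 = edot x x.
Proof. by rewrite sqr_sqrtr // edot_ge0. Qed.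

Lemma enorm_leP x r : 0 <= r -> (enorm x <= r) = (edot x x <= r ^+ 2).
Proof. by move=> r0; rewrite -[r in LHS]ger0_norm // -sqrtr_sqr ler_sqrt ?exprn_ge0. Qed.

Lemma enormZ a x : enorm (a *: x) = `|a| * enorm x.
Proof. by rewrite /enorm edotZl edotZr mulrA -expr2 sqrtrM ?sqr_ge0 // sqrtr_sqr. Qed.

Lemma enormB x y : enorm (x - y) = enorm (y - x).
Proof. by rewrite -opprB /enorm edotNl edotNr opprK. Qed.

Lemma edot_le_enorm x y : edot x y <= enorm x * enorm y.
Proof.
have [->|y0] := eqVneq y 0; first by rewrite edot0r mulr_ge0 ?enorm_ge0.
have b0 : 0 < edot y y.
  by rewrite lt0r edot_ge0 andbT; apply: contra_neq y0 => /edot_eq0.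
suff : edot x y ^+ 2 <= edot x x * edot y y.
  rewrite -ler_sqrt ?mulr_ge0 ?edot_ge0 // sqrtr_sqr sqrtrM ?edot_ge0 //.
  exact: le_trans (ler_norm _).
have := edot_ge0 (edot y y *: x - edot x y *: y).
rewrite !(edotBl, edotBr, edotZl, edotZr) (edotC y x).
set a := edot x x; set b := edot y y; set c := edot x y => h.
have : 0 <= b * (a * b - c ^+ 2) by lra.
by rewrite pmulr_rge0 // subr_ge0.
Qed.

Lemma enormD_le x y : enorm (x + y) <= enorm x + enorm y.
Proof.
rewrite enorm_leP ?addr_ge0 ?enorm_ge0 // edot_sqrD.
have := edot_le_enorm x y; rewrite sqrrD !enorm_sqr; lra.
Qed.

Lemma rel_int_eball K U c r y : rel_open setT U -> U y -> enorm (y - c) < r ->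
  (forall z, eball c r z -> U z -> K z) -> rel_int setT K y.
Proof.
move=> [_ oU] Uy yc ballUK; split => //; have [d d0 dU] := oU y Uy.
exists (Num.min d (r - enorm (y - c))) => [|z _]; first by rewrite lt_min d0 subr_gt0.
rewrite lt_min => /andP[zd zc]; apply: ballUK; last exact: dU.
rewrite /eball /= -[z - c](@subrKA _ y) (le_trans (enormD_le _ _)) //; lra.
Qed.

Lemma enorm_move_inward x c v t : 0 < t -> t * edot v v < 2 * edot v (c - x) ->
  enorm (x + t *: v - c) < enorm (x - c).
Proof.
move=> t0 tv; set y := x + t *: v - c.
have lt_yx : edot y y < edot (x - c) (x - c).
  rewrite -[c - x]opprB edotNr in tv.
  rewrite /y addrAC (edot_sqrD (x - c)) !(edotZl, edotZr) (edotC (x - c)).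
  have : 0 < t * (2 * - edot v (x - c) - t * edot v v) by rewrite mulr_gt0 // subr_gt0.
  lra.
by rewrite /enorm ltr_sqrt // (le_lt_trans (edot_ge0 y)).
Qed.

End EuclideanSpace.

Section OrthogonalProjection.
Variables (R : realType) (m : nat) (P : 'M[R]_m).
Implicit Types x y z : 'rV[R]_m.

Local Notation B := (row_base P).

Lemma row_base_gram_unit : B *m B^T \in unitmx.
Proof.
rewrite -row_free_unit; apply: inj_row_free => v vG0.
have : edot (v *m B) (v *m B) = 0.
  by rewrite /edot trmx_mul mulmxA -(mulmxA v) vG0 mul0mx mxE.
by move/edot_eq0/eqP; rewrite mulmx_free_eq0 ?row_base_free // => /eqP.
Qed.

Definition oproj_mx : 'M[R]_m := B^T *m invmx (B *m B^T) *m B.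

Definition proj (x : 'rV[R]_m) : 'rV[R]_m := x *m oproj_mx.
Fact proj_is_semilinear : semilinear proj.
Proof. exact: mulmxr_is_semilinear. Qed.
HB.instance Definition _ :=
  GRing.isSemilinear.Build R 'rV[R]_m 'rV[R]_m _ proj proj_is_semilinear.

Lemma proj_sub x : (proj x <= P)%MS.
Proof. by rewrite /proj /oproj_mx mulmxA -(eq_row_base P) submxMl. Qed.

Lemma proj_orth x z : (z <= P)%MS -> edot (x - proj x) z = 0.
Proof.
rewrite -(eq_row_base P) /edot /proj /oproj_mx => /submxP[D ->].
move: row_base_gram_unit; move: (row_base P) => C CU.
rewrite trmx_mul mulmxA mulmxBl !mulmxA -(mulmxA _ C) -(mulmxA _ (invmx _)).
by rewrite mulVmx // mulmx1 subrr mul0mx mxE.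
Qed.

Lemma projP x y : (y <= P)%MS ->
  (forall z, (z <= P)%MS -> edot (x - y) z = 0) -> proj x = y.
Proof.
move=> yP xy_orth.
have dP : (proj x - y <= P)%MS by rewrite addmx_sub ?proj_sub // -scaleN1r scalemx_sub.
have : edot (proj x - y) (proj x - y) = 0.
  have E : (x - y) - (x - proj x) = proj x - y by rewrite opprB addrC addrA subrK.
  by rewrite -{1}E edotBl xy_orth ?proj_orth // subrr.
by move/edot_eq0/eqP; rewrite subr_eq0 => /eqP.
Qed.

Lemma proj_id y : (y <= P)%MS -> proj y = y.
Proof. by move=> yP; apply: projP => // z _; rewrite subrr /edot mul0mx mxE. Qed.

Lemma proj_shift x y : (y <= P)%MS -> proj (y + (x - proj x)) = y.
Proof.
move=> yP; rewrite linearD linearB /= (proj_id yP) (proj_id (proj_sub x)).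
by rewrite subrr addr0.
Qed.

Lemma edot_proj_le x : edot (proj x) (proj x) <= edot x x.
Proof.
set w := x - proj x; have xE : x = w + proj x by rewrite subrK.
have orth : edot w (proj x) = 0 by rewrite proj_orth ?proj_sub.
clearbody w; rewrite {3 4}xE edot_sqrD orth mulr0 addr0.
by rewrite lerDr edot_ge0.
Qed.

End OrthogonalProjection.

Section ConvexHull.
Variables (R : realType) (m m' : nat).
Implicit Types (A : set 'rV[R]_m).

Lemma conv_hull_convex A : convex_set (conv_hull A).
Proof.
move=> x y t Ax Ay t01 C cC AsubC.
exact: cC (Ax C cC AsubC) (Ay C cC AsubC) t01.
Qed.

Lemma sub_conv_hull A : A `<=` conv_hull A.
Proof. by move=> a Aa C _; apply. Qed.

Variable f : {linear 'rV[R]_m -> 'rV[R]_m'}.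

Lemma convex_image A : convex_set A -> convex_set (f @` A).
Proof.
move=> cA _ _ t [x Ax <-] [y Ay <-] t01.
by exists (t *: x + (1 - t) *: y); [exact: cA | rewrite linearD !linearZ].
Qed.

Lemma image_conv_hull A : f @` conv_hull A = conv_hull (f @` A).
Proof.
apply/seteqP; split.
  move=> _ [x Ax <-] C cC fAC; apply: (Ax (f @^-1` C)).
    by move=> y z t Cy Cz t01 /=; rewrite linearD !linearZ; apply: cC.
  by move=> a Aa; apply: fAC; exists a.
move=> y hy; apply: hy; first by apply: convex_image; apply: conv_hull_convex.
by move=> _ [a Aa <-]; exists a => //; apply: sub_conv_hull.
Qed.

End ConvexHull.

Section MatrixContinuity.
Variables (R : realType) (m : nat).

Lemma mxentry_le_norm p q (A : 'M[R]_(p, q)) i j : `|A i j| <= `|A|.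
Proof. by rewrite [leRHS]/Num.Def.normr /= mx_normrE; exact: (le_bigmax _ _ (i, j)). Qed.

Lemma mx_norm_le_enorm (x : 'rV[R]_m) : `|x| <= enorm x.
Proof.
rewrite [leLHS]/Num.Def.normr /= mx_normrE bigmax_le ?enorm_ge0 // => -[i j] _ /=.
rewrite (ord1 i) -sqrtr_sqr ler_sqrt ?edot_ge0 // edotE (bigD1 j) //= -expr2 lerDl.
by rewrite sumr_ge0 // => k _; rewrite -expr2 sqr_ge0.
Qed.

Lemma mulmx_norm_le n (M : 'M[R]_(m, n)) (x : 'rV[R]_m) :
  `|x *m M| <= (`|M| *+ m) * `|x|.
Proof.
rewrite [leLHS]/Num.Def.normr /= mx_normrE bigmax_le ?mulr_ge0 ?mulrn_wge0 //.
move=> -[i j] _ /=; rewrite mxE (le_trans (ler_norm_sum _ _ _)) //.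
rewrite mulrnAl -[m in _ *+ m]card_ord -sumr_const ler_sum // => k _.
by rewrite normrM mulrC ler_pM ?mxentry_le_norm.
Qed.

Lemma mulmxr_continuous n (M : 'M[R]_(m, n)) :
  continuous (fun x : 'rV[R]_m => x *m M).
Proof.
move=> x; apply/(@cvgrPdist_lt _ _ _ _ (nbhs_filter x)) => e e0.
set C := `|M| *+ m + 1; have C0 : 0 < C by rewrite ltr_wpDl // mulrn_wge0.
apply/(@nbhs_normP R ('rV[R]_m : pseudoMetricNormedZmodType R)).
exists (e / C) => [|y /= xy]; first by rewrite /= divr_gt0.
rewrite -mulmxBl (le_lt_trans (mulmx_norm_le _ _)) //.
rewrite (@le_lt_trans _ _ (C * `|x - y|)) ?ler_wpM2r ?lerDl //.
by rewrite mulrC -ltr_pdivlMr.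
Qed.

End MatrixContinuity.

Section ProjectedBodies.
Variables (R : realType) (m : nat) (P : 'M[R]_m).
Implicit Types (x y z c : 'rV[R]_m) (r lam : R) (K U : set 'rV[R]_m).

Local Notation proj := (proj P).

Lemma oprojE K : oproj P K = proj @` K.
Proof.
apply/seteqP; split => [y [yP [x [Kx xy]]] | _ [x Kx <-]].
  by exists x => //; apply: projP.
by split; [exact: proj_sub | exists x; split => // z; apply: proj_orth].
Qed.

Lemma oproj_compact K : compact K -> compact (oproj P K).
Proof.
move=> cK; rewrite oprojE; apply: continuous_compact => //.
by apply: continuous_subspaceT; apply: mulmxr_continuous.
Qed.

Lemma oproj_rel_cl K p : compact K -> rel_cl (subsp P) (oproj P K) p -> oproj P K p.
Proof.
move=> cK [_ pcl].
have : closed (oproj P K).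
  apply: compact_closed; last exact: oproj_compact.
  exact: (@norm_hausdorff R ('rV[R]_m : pseudoMetricNormedZmodType R)).
apply=> B /(@nbhs_normP R ('rV[R]_m : pseudoMetricNormedZmodType R))[e e0 pB].
have [z [Kz zp]] := pcl e e0; exists z; split => //; apply: pB => /=.
by rewrite distrC (le_lt_trans (mx_norm_le_enorm _) zp).
Qed.

Lemma oproj_rel_int K y : rel_int setT K y -> rel_int (subsp P) (oproj P K) (proj y).
Proof.
move=> [_ [e e0 yK]]; split; first exact: proj_sub.
exists e => // z zP ze; rewrite oprojE; exists (z + (y - proj y)); last exact: proj_shift.
by apply: yK => //; rewrite addrCA addrAC subrr add0r.
Qed.

Lemma oproj_convex_body K :
  convex_body_in setT K -> convex_body_in (subsp P) (oproj P K).
Proof.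
move=> [_ [cK [convK [y Ky]]]]; split; first by move=> ? [].
split; first exact: oproj_compact.
split; first by rewrite oprojE; apply: convex_image.
by exists (proj y); apply: oproj_rel_int.
Qed.

Lemma oproj_rel_bd K p : compact K -> rel_bd (subsp P) (oproj P K) p ->
  exists2 x, rel_bd setT K x & proj x = p.
Proof.
move=> cK [pcl pNint]; have := oproj_rel_cl cK pcl; rewrite oprojE => -[x Kx px].
exists x => //; split; last by move/oproj_rel_int; rewrite px.
by split => // e e0; exists x; rewrite subrr /enorm edot0r sqrtr0.
Qed.

Lemma image_proj_eball c r : proj @` eball c r = eball (proj c) r `&` subsp P.
Proof.
apply/seteqP; split => [_ [z zc <-] | y [yc yP]].
  split; last exact: proj_sub.
  have r0 : 0 <= r := le_trans (enorm_ge0 _) zc.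
  move: zc; rewrite /eball /= !enorm_leP // -linearB.
  exact: le_trans (edot_proj_le _ _).
exists (y + (c - proj c)); last exact: proj_shift.
by rewrite /eball /= addrCA addrAC subrr add0r.
Qed.

Lemma supporting_center_sub K U x c r :
  rel_open setT U -> U x -> enorm (x - c) = r -> (forall z, eball c r z -> U z -> K z) ->
  ~ rel_int (subsp P) (oproj P K) (proj x) -> (c - x <= P)%MS.
Proof.
move=> oU Ux xc ballUK; set w := c - x - proj (c - x).
have [w0 | wN0] := eqVneq w 0.
  by move=> _; rewrite -(subrK (proj (c - x)) (c - x)) -/w w0 add0r proj_sub.
have projw : proj w = 0 by rewrite /w linearB /= (proj_id (proj_sub P _)) subrr.
have wcx : edot w (c - x) = edot w w.
  have wq : edot w (proj (c - x)) = 0 by apply/proj_orth/proj_sub.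
  by rewrite -(subrK (proj (c - x)) (c - x)) -/w edotDr wq addr0.
have w_gt0 : 0 < edot w w.
  by rewrite lt0r edot_ge0 andbT; apply: contra_neq wN0 => /edot_eq0.
have [d d0 dU] := oU.2 x Ux.
set t := Num.min 1 (d / (2 * enorm w)).
have nw_gt0 : 0 < enorm w by rewrite sqrtr_gt0.
have t_gt0 : 0 < t by rewrite lt_min ltr01 divr_gt0 ?mulr_gt0.
have twd : t * enorm w < d.
  have : t <= d / (2 * enorm w) by rewrite /t ge_min lexx orbT.
  rewrite ler_pdivlMr ?mulr_gt0 //; lra.
have tww : t * edot w w <= edot w w.
  by apply: ler_piMl; [exact: ltW | rewrite /t ge_min lexx].
move=> xNint; exfalso; apply: xNint.
have -> : proj x = proj (x + t *: w) by rewrite linearD linearZ /= projw scaler0 addr0.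
apply/oproj_rel_int/(rel_int_eball oU _ _ ballUK).
- by apply: dU => //; rewrite addrAC subrr add0r enormZ gtr0_norm.
- by rewrite -xc enorm_move_inward // wcx; lra.
Qed.

Lemma oproj_supporting_ball K U x c r :
  rel_open setT U -> U x -> (forall z, eball c r z -> U z -> K z) -> (c - x <= P)%MS ->
  exists U', rel_open (subsp P) U' /\ U' (proj x) /\
    forall y, subsp P y -> eball (proj c) r y -> U' y -> oproj P K y.
Proof.
move=> [_ oU] Ux ballUK cxP; set d := x - proj x.
have cE : proj c = c - d.
  by rewrite -{1}(subrK x c) linearD /= proj_id // /d opprB addrA addrAC.
exists [set y | subsp P y /\ U (y + d)]; split; [split | split].
- by move=> y [].
- move=> y [yP Uyd]; have [e e0 eU] := oU _ Uyd.
  by exists e => // z zP ze; split => //; apply: eU => //; rewrite (addrC y) addrKA.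
- by split; [exact: proj_sub | rewrite subrKC].
- move=> y yP yc [_ Uyd]; rewrite oprojE; exists (y + d); last exact: proj_shift.
  by apply: ballUK Uyd; move: yc; rewrite /eball /= cE opprB addrA.
Qed.

Lemma oproj_lconcave lam K :
  lconcave_in lam setT K -> lconcave_in lam (subsp P) (oproj P K).
Proof.
move=> [Kbody Ksupp]; split; first exact: oproj_convex_body.
move=> p pbd; have [x xbd px] := oproj_rel_bd Kbody.2.1 pbd; subst p.
have [c [_ [xc [U [oU [Ux ballUK]]]]]] := Ksupp x xbd.
have {}ballUK z : eball c lam^-1 z -> U z -> K z := ballUK z I.
have cxP := supporting_center_sub oU Ux xc ballUK pbd.2.
exists (proj c); split; first exact: proj_sub.
split; first by rewrite enormB -linearB /= proj_id // enormB.
exact: oproj_supporting_ball oU Ux ballUK cxP.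
Qed.

Lemma oproj_lsausage lam K :
  lsausage_in lam setT K -> lsausage_in lam (subsp P) (oproj P K).
Proof.
move=> [c1 [c2 [_ [_ ->]]]]; exists (proj c1), (proj c2).
do 2 (split; first exact: proj_sub).
by rewrite oprojE image_conv_hull image_setU !setIT !image_proj_eball.
Qed.

End ProjectedBodies.

Theorem lemma2p4 (R : realType) (n k : nat) (lam : R)
    (K : set 'rV[R]_(n.+1)) (P : 'M[R]_(n.+1)) :
  0 < lam -> (0 < k)%N -> (k <= n)%N -> \rank P = k.+1 ->
  lconcave_in lam setT K ->
  lconcave_in lam (subsp P) (oproj P K) /\
  (lsausage_in lam setT K -> lsausage_in lam (subsp P) (oproj P K)).
Proof.
move=> _ _ _ _ Kconc; split; first exact: oproj_lconcave.
exact: oproj_lsausage.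
Qed.
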